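(* Let $p,q\in(0,1/2)$ with $\frac{\log p}{\log q}\notin\mathbb Q$. Then the system $\{S_1,S_2,S_3,S_4\}$, where $S_1(x)=px$, $S_2(x)=qx$, $S_3(x)=px+1-p$, $S_4(x)=qx+1-q$, does not have the weak separation property.
   Context: For a system $\{S_1,\dots,S_m\}$ of contracting similarities, let $I^*$ be the set of finite words over $\{1,\dots,m\}$ and $S_{\mathbf i}=S_{i_1}\circ\cdots\circ S_{i_n}$ for $\mathbf i=i_1\dots i_n$. The weak separation property (WSP, in the sense of Lau and Ngai) holds, equivalently (Zerner), if and only if the identity map is not an accumulation point of the family $\{S_{\mathbf j}^{-1}S_{\mathbf i}:\mathbf i,\mathbf j\in I^*\}\setminus\{\mathrm{Id}\}$ (in the topology of similarity maps, e.g. convergence of the coefficients of the affine maps). *)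

From Stdlib Require Import Reals List QArith.
Open Scope R_scope.

(* A similarity of the real line x |-> a x + b, represented by its
   coefficients (a, b). *)
Definition sim := (R * R)%type.

Definition sim_apply (f : sim) (x : R) : R := fst f * x + snd f.

Definition sim_id : sim := (1, 0).

Definition sim_comp (f g : sim) : sim :=
  (fst f * fst g, fst f * snd g + snd f).

Definition sim_inv (f : sim) : sim := (/ fst f, - (snd f / fst f)).

(* An IFS {S_1,...,S_m} is a list of similarities; index i (0-based) picks S_{i+1}. *)
Definition IFS := list sim.

Definition is_word (S : IFS) (w : list nat) : Prop :=
  Forall (fun i => (i < length S)%nat) w.

Fixpoint sim_word (S : IFS) (w : list nat) : sim :=
  match w with
  | nil => sim_id
  | i :: w' => sim_comp (nth i S sim_id) (sim_word S w')
  end.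

Definition in_family (S : IFS) (g : sim) : Prop :=
  exists i j, is_word S i /\ is_word S j /\
    g = sim_comp (sim_inv (sim_word S j)) (sim_word S i).

(* Weak separation property, via Zerner's characterization: the identity is
   not an accumulation point of the family minus the identity, in the topology
   of convergence of the coefficients. *)
Definition WSP (S : IFS) : Prop :=
  exists eps : R, 0 < eps /\
    forall g : sim, in_family S g -> g <> sim_id ->
      eps <= Rabs (fst g - 1) \/ eps <= Rabs (snd g).

(** The words [1^n 2^m] give the homotheties [x |-> p^n q^m x], so the family
    contains [x |-> exp z x] for every [z] in the additive group generated by
    [ln p] and [ln q].  Under the weak separation property the positive elements
    of that group stay above some [d > 0].  Running the subtractive Euclidean
    algorithm on a positive pair of generators then decreases their sum by at
    least [d] per step, which cannot go on forever; it can only stop when the two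
    generators coincide, and then [ln p / ln q] is rational. *)

From Stdlib Require Import Reals List QArith.
From Stdlib Require Import ZArith Qreals Lia Lra.
Open Scope R_scope.

Lemma IZR_nat_diff (i : Z) : exists n n' : nat, IZR i = INR n - INR n'.
Proof.
  destruct i as [| k | k].
  - exists 0%nat, 0%nat; simpl; ring.
  - exists (Pos.to_nat k), 0%nat; rewrite INR_IZR_INZ, positive_nat_Z; simpl; ring.
  - exists 0%nat, (Pos.to_nat k).
    rewrite (INR_IZR_INZ (Pos.to_nat k)), positive_nat_Z, <- Pos2Z.opp_pos, opp_IZR.
    simpl; ring.
Qed.

Lemma pow_exp_ln (x : R) (n : nat) : 0 < x -> x ^ n = exp (INR n * ln x).
Proof. intros Hx; rewrite <- Rpower_pow by exact Hx; reflexivity. Qed.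

Lemma opp_ln_pos (x : R) : 0 < x < 1 -> 0 < - ln x.
Proof.
  intros Hx; assert (Hlt : ln x < ln 1) by (apply ln_increasing; lra).
  rewrite ln_1 in Hlt; lra.
Qed.

Definition zcomb (a b z : R) : Prop := exists i j : Z, z = IZR i * a + IZR j * b.

Lemma zcomb_l (a b : R) : zcomb a b a.
Proof. exists 1%Z, 0%Z; simpl; ring. Qed.

Lemma zcomb_r (a b : R) : zcomb a b b.
Proof. exists 0%Z, 1%Z; simpl; ring. Qed.

Lemma zcomb_comm (a b z : R) : zcomb a b z <-> zcomb b a z.
Proof. split; intros [i [j ->]]; exists j, i; ring. Qed.

Lemma zcomb_opp (a b z : R) : zcomb (- a) (- b) z <-> zcomb a b z.
Proof. split; intros [i [j ->]]; exists (- i)%Z, (- j)%Z; rewrite !opp_IZR; ring. Qed.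

Lemma zcomb_subr (a b z : R) : zcomb a (b - a) z <-> zcomb a b z.
Proof.
  split; intros [i [j ->]].
  - exists (i - j)%Z, j; rewrite minus_IZR; ring.
  - exists (i + j)%Z, j; rewrite plus_IZR; ring.
Qed.

Lemma zcomb_diag (a z : R) : zcomb a a z -> exists k : Z, z = IZR k * a.
Proof. intros [i [j ->]]; exists (i + j)%Z; rewrite plus_IZR; ring. Qed.

Lemma ratio_of_int_multiples (x a b : R) (k l : Z) :
  a = IZR k * x -> b = IZR l * x -> b <> 0 -> exists r : Q, a / b = Q2R r.
Proof.
  intros -> -> Hb.
  assert (Hl : IZR l <> 0) by (intro E; apply Hb; rewrite E; ring).
  assert (Hx : x <> 0) by (intro E; apply Hb; rewrite E; ring).
  exists (inject_Z k / inject_Z l)%Q.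
  rewrite Q2R_div.
  - unfold Q2R; simpl; field; auto.
  - intro E; apply Hl; unfold Qeq in E; simpl in E; replace l with 0%Z by lia; reflexivity.
Qed.

Section EuclideanDescent.

Variables a b d : R.
Hypothesis a_gt0 : 0 < a.
Hypothesis b_gt0 : 0 < b.
Hypothesis ratio_irrational : ~ exists r : Q, a / b = Q2R r.
Hypothesis gap : forall z, zcomb a b z -> 0 < z -> d <= z.

Definition positive_basis (x y : R) : Prop :=
  0 < x /\ 0 < y /\ forall z, zcomb x y z <-> zcomb a b z.

Lemma positive_basis_step (x y : R) :
  positive_basis x y -> exists x' y', positive_basis x' y' /\ x' + y' <= x + y - d.
Proof.
  intros (Hx & Hy & Hspan).
  destruct (Rtotal_order x y) as [Hlt | [<- | Hgt]].
  - assert (d <= x) by (apply gap; [apply Hspan, zcomb_l | exact Hx]).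
    exists x, (y - x); repeat split; try lra.
    + intros Hz; apply Hspan, zcomb_subr, Hz.
    + intros Hz; apply zcomb_subr, Hspan, Hz.
  - exfalso; apply ratio_irrational.
    destruct (zcomb_diag x a) as [k Hk]; [apply Hspan, zcomb_l|].
    destruct (zcomb_diag x b) as [l Hl]; [apply Hspan, zcomb_r|].
    apply (ratio_of_int_multiples x a b k l); lra.
  - assert (d <= y) by (apply gap; [apply Hspan, zcomb_r | exact Hy]).
    exists (x - y), y; repeat split; try lra.
    + intros Hz; apply Hspan, zcomb_comm, zcomb_subr, zcomb_comm, Hz.
    + intros Hz; apply zcomb_comm, zcomb_subr, zcomb_comm, Hspan, Hz.
Qed.

Lemma positive_basis_descent (n : nat) :
  exists x y, positive_basis x y /\ x + y <= a + b - INR n * d.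
Proof.
  induction n as [| n [x [y [Hxy Hsum]]]].
  - exists a, b; split; [repeat split; auto | simpl; lra].
  - destruct (positive_basis_step x y Hxy) as [x' [y' [Hxy' Hsum']]].
    exists x', y'; split; [exact Hxy' | rewrite S_INR; lra].
Qed.

Lemma zcomb_gap_nonpositive : d <= 0.
Proof.
  apply Rnot_lt_le; intros Hd.
  destruct (INR_archimed d (a + b) Hd) as [n Hn].
  destruct (positive_basis_descent n) as [x [y [(Hx & Hy & _) Hsum]]].
  lra.
Qed.

End EuclideanDescent.

Section Homotheties.

Variables (p q : R) (T : IFS).
Hypothesis p_gt0 : 0 < p.
Hypothesis q_gt0 : 0 < q.

Let S : IFS := (p, 0) :: (q, 0) :: T.

Definition homothety_word (n m : nat) : list nat := repeat 0%nat n ++ repeat 1%nat m.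

Lemma is_word_homothety_word (n m : nat) : is_word S (homothety_word n m).
Proof.
  apply Forall_forall; intros i Hi.
  apply in_app_or in Hi; simpl.
  destruct Hi as [Hi | Hi]; apply repeat_spec in Hi; lia.
Qed.

Lemma sim_word_homothety_word (n m : nat) :
  sim_word S (homothety_word n m) = (p ^ n * q ^ m, 0).
Proof.
  unfold homothety_word; induction n as [| n IH]; simpl.
  - induction m as [| m IHm]; simpl; [unfold sim_id; f_equal; ring|].
    rewrite IHm; unfold sim_comp; simpl; f_equal; ring.
  - rewrite IH; unfold sim_comp; simpl; f_equal; ring.
Qed.

Lemma in_family_exp_zcomb (z : R) : zcomb (ln p) (ln q) z -> in_family S (exp z, 0).
Proof.
  intros [i [j ->]].
  destruct (IZR_nat_diff i) as [n [n' ->]].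
  destruct (IZR_nat_diff j) as [m [m' ->]].
  exists (homothety_word n m), (homothety_word n' m').
  repeat split; try apply is_word_homothety_word.
  rewrite !sim_word_homothety_word, !(pow_exp_ln p), !(pow_exp_ln q) by assumption.
  unfold sim_comp, sim_inv; simpl; f_equal.
  - replace ((INR n - INR n') * ln p + (INR m - INR m') * ln q)
      with ((INR n * ln p + INR m * ln q) + - (INR n' * ln p + INR m' * ln q)) by ring.
    rewrite exp_plus, exp_Ropp, !exp_plus; field.
    split; apply Rgt_not_eq, exp_pos.
  - unfold Rdiv; ring.
Qed.

Lemma WSP_zcomb_ln_gap :
  WSP S -> exists d, 0 < d /\ forall z, zcomb (ln p) (ln q) z -> 0 < z -> d <= z.
Proof.
  intros [eps [Heps HW]].
  exists (ln (1 + eps)); split.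
  - rewrite <- ln_1; apply ln_increasing; lra.
  - intros z Hz Hpos.
    assert (Hexp : 1 < exp z) by (rewrite <- exp_0; apply exp_increasing, Hpos).
    assert (Hne : (exp z, 0) <> sim_id) by (unfold sim_id; intros E; injection E as E; lra).
    destruct (HW _ (in_family_exp_zcomb z Hz) Hne) as [H | H]; simpl in H.
    + rewrite Rabs_right in H by lra.
      apply Rnot_lt_le; intros Hlt.
      apply exp_increasing in Hlt; rewrite exp_ln in Hlt; lra.
    + rewrite Rabs_R0 in H; lra.
Qed.

End Homotheties.

Theorem homotheties_not_WSP (p q : R) (T : IFS) :
  0 < p < 1 -> 0 < q < 1 ->
  (~ exists r : Q, ln p / ln q = Q2R r) ->
  ~ WSP ((p, 0) :: (q, 0) :: T).
Proof.
  intros Hp Hq Hirr HW.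
  destruct (WSP_zcomb_ln_gap p q T (proj1 Hp) (proj1 Hq) HW) as [d [Hd Hgap]].
  enough (d <= 0) by lra.
  apply (zcomb_gap_nonpositive (- ln p) (- ln q)); try apply opp_ln_pos; auto.
  - intros [r Hr]; apply Hirr; exists r; rewrite <- Hr.
    assert (0 < - ln q) by (apply opp_ln_pos; exact Hq).
    field; lra.
  - intros z Hz; apply Hgap, zcomb_opp, Hz.
Qed.

Theorem proposition9 (p q : R) :
  0 < p < 1 / 2 -> 0 < q < 1 / 2 ->
  (~ exists r : Q, ln p / ln q = Q2R r) ->
  ~ WSP ((p, 0) :: (q, 0) :: (p, 1 - p) :: (q, 1 - q) :: nil).
Proof. intros Hp Hq; apply homotheties_not_WSP; lra. Qed.
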